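(* For the modified EnvZ/OmpR network described in the context and any positive rate constants $k_1,\dots,k_{16}$, put \[\gamma=\frac{k_{10}k_{12}}{k_{11}+k_{12}}\cdot\frac{k_3}{k_4+k_5}+\frac{k_{13}k_{15}}{k_{14}+k_{15}}\cdot\frac{k_2}{k_1}.\] Then for every choice of positive values of $[\mathrm{EnvZ}]$ and $[\mathrm{EnvZ\text{-}P}]$ there is exactly one positive steady state with these values, and at every positive steady state \[[\mathrm{OmpR\text{-}P}]=\frac{k_3k_5\,[\mathrm{EnvZ}]}{(k_4+k_5)(\gamma[\mathrm{EnvZ}]+k_{16})}.\] Consequently, the set of values of $[\mathrm{OmpR\text{-}P}]$ over all positive steady states is exactly the open interval $\bigl(0,\;k_3k_5/((k_4+k_5)\gamma)\bigr)$; in particular $[\mathrm{OmpR\text{-}P}]$ does not exhibit absolute concentration robustness (it takes different values at different positive steady states), and $k_3k_5/((k_4+k_5)\gamma)$ is the best possible upper bound.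
   Context: The modified EnvZ/OmpR network has mass-action kinetics and reactions $\mathrm{EnvZ\text{-}ADP}\underset{k_2}{\overset{k_1}{\rightleftharpoons}}\mathrm{EnvZ}\underset{k_4}{\overset{k_3}{\rightleftharpoons}}\mathrm{EnvZ\text{-}ATP}\xrightarrow{k_5}\mathrm{EnvZ\text{-}P}$; $\mathrm{EnvZ\text{-}P}+\mathrm{OmpR}\underset{k_7}{\overset{k_6}{\rightleftharpoons}}\mathrm{EnvZ\text{-}P\text{-}OmpR}\underset{k_9}{\overset{k_8}{\rightleftharpoons}}\mathrm{EnvZ}+\mathrm{OmpR\text{-}P}$; $\mathrm{EnvZ\text{-}ATP}+\mathrm{OmpR\text{-}P}\underset{k_{11}}{\overset{k_{10}}{\rightleftharpoons}}\mathrm{EnvZ\text{-}ATP\text{-}OmpR\text{-}P}\xrightarrow{k_{12}}\mathrm{EnvZ\text{-}ATP}+\mathrm{OmpR}$; $\mathrm{EnvZ\text{-}ADP}+\mathrm{OmpR\text{-}P}\underset{k_{14}}{\overset{k_{13}}{\rightleftharpoons}}\mathrm{EnvZ\text{-}ADP\text{-}OmpR\text{-}P}\xrightarrow{k_{15}}\mathrm{EnvZ\text{-}ADP}+\mathrm{OmpR}$; $\mathrm{OmpR\text{-}P}\xrightarrow{k_{16}}\mathrm{OmpR}$ (here $A\underset{k'}{\overset{k}{\rightleftharpoons}}B$ means $A\xrightarrow{k}B$ and $B\xrightarrow{k'}A$; hyphenated names are single species, nine species in total). Square brackets denote concentrations; a positive steady state is a vector of positive concentrations of all nine species at which all mass-action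 rates of change vanish. A species exhibits absolute concentration robustness if it takes the same value at every positive steady state. *)

From Stdlib Require Import Reals Lra.
Open Scope R_scope.

Record state : Type := mkState {
  EnvZ_ADP : R;
  EnvZ : R;
  EnvZ_ATP : R;
  EnvZ_P : R;
  OmpR : R;
  EnvZ_P_OmpR : R;
  OmpR_P : R;
  EnvZ_ATP_OmpR_P : R;
  EnvZ_ADP_OmpR_P : R }.

(* Rate constants k_1..k_16 are given by a function k : nat -> R
   (only the values k 1, ..., k 16 matter). *)
Definition rates_pos (k : nat -> R) : Prop :=
  forall i : nat, (1 <= i <= 16)%nat -> 0 < k i.

Section Rates.
Variables (k : nat -> R) (x : state).
Definition r1 := k 1%nat * EnvZ_ADP x.
Definition r2 := k 2%nat * EnvZ x.
Definition r3 := k 3%nat * EnvZ x.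
Definition r4 := k 4%nat * EnvZ_ATP x.
Definition r5 := k 5%nat * EnvZ_ATP x.
Definition r6 := k 6%nat * EnvZ_P x * OmpR x.
Definition r7 := k 7%nat * EnvZ_P_OmpR x.
Definition r8 := k 8%nat * EnvZ_P_OmpR x.
Definition r9 := k 9%nat * EnvZ x * OmpR_P x.
Definition r10 := k 10%nat * EnvZ_ATP x * OmpR_P x.
Definition r11 := k 11%nat * EnvZ_ATP_OmpR_P x.
Definition r12 := k 12%nat * EnvZ_ATP_OmpR_P x.
Definition r13 := k 13%nat * EnvZ_ADP x * OmpR_P x.
Definition r14 := k 14%nat * EnvZ_ADP_OmpR_P x.
Definition r15 := k 15%nat * EnvZ_ADP_OmpR_P x.
Definition r16 := k 16%nat * OmpR_P x.

Definition d_EnvZ_ADP := - r1 + r2 - r13 + r14 + r15.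
Definition d_EnvZ := r1 - r2 - r3 + r4 + r8 - r9.
Definition d_EnvZ_ATP := r3 - r4 - r5 - r10 + r11 + r12.
Definition d_EnvZ_P := r5 - r6 + r7.
Definition d_OmpR := - r6 + r7 + r12 + r15 + r16.
Definition d_EnvZ_P_OmpR := r6 - r7 - r8 + r9.
Definition d_OmpR_P := r8 - r9 - r10 + r11 - r13 + r14 - r16.
Definition d_EnvZ_ATP_OmpR_P := r10 - r11 - r12.
Definition d_EnvZ_ADP_OmpR_P := r13 - r14 - r15.
End Rates.

Definition positive_state (x : state) : Prop :=
  0 < EnvZ_ADP x /\ 0 < EnvZ x /\ 0 < EnvZ_ATP x /\ 0 < EnvZ_P x /\
  0 < OmpR x /\ 0 < EnvZ_P_OmpR x /\ 0 < OmpR_P x /\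
  0 < EnvZ_ATP_OmpR_P x /\ 0 < EnvZ_ADP_OmpR_P x.

Definition positive_steady_state (k : nat -> R) (x : state) : Prop :=
  positive_state x /\
  d_EnvZ_ADP k x = 0 /\ d_EnvZ k x = 0 /\ d_EnvZ_ATP k x = 0 /\
  d_EnvZ_P k x = 0 /\ d_OmpR k x = 0 /\ d_EnvZ_P_OmpR k x = 0 /\
  d_OmpR_P k x = 0 /\ d_EnvZ_ATP_OmpR_P k x = 0 /\ d_EnvZ_ADP_OmpR_P k x = 0.

Definition ACR (k : nat -> R) (sp : state -> R) : Prop :=
  exists c : R, forall x : state, positive_steady_state k x -> sp x = c.

Definition gamma (k : nat -> R) : R :=
  k 10%nat * k 12%nat / (k 11%nat + k 12%nat) * (k 3%nat / (k 4%nat + k 5%nat))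
  + k 13%nat * k 15%nat / (k 14%nat + k 15%nat) * (k 2%nat / k 1%nat).

(* At a positive steady state, the binding/unbinding balances of the six
   species EnvZ-ADP, EnvZ-ATP, EnvZ-ATP-OmpR-P, EnvZ-ADP-OmpR-P,
   EnvZ-P-OmpR and OmpR are each linear in the species they solve for, so
   every concentration is determined by [EnvZ] = e, [EnvZ-P] = p and
   [OmpR-P] = q.  Adding the balances of EnvZ-P and OmpR gives the
   conservation  k5 [EnvZ-ATP] = k12 [EnvZ-ATP-OmpR-P] + k15 [EnvZ-ADP-OmpR-P]
   + k16 q,  which pins down  q = M e / (gamma e + k16)  with
   M = k3 k5 / (k4 + k5).  Conversely these formulas define a positive
   steady state for all e, p > 0 (steady_state_of). *)
From Stdlib Require Import Reals Lra Lia.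
Open Scope R_scope.

Definition saturation (a b c e : R) : R := a * e / (b * e + c).

Section Saturation.
Variables a b c : R.
Hypotheses (ha : 0 < a) (hb : 0 < b) (hc : 0 < c).

Lemma saturation_inj (e1 e2 : R) : 0 < e1 -> 0 < e2 ->
  saturation a b c e1 = saturation a b c e2 -> e1 = e2.
Proof.
  unfold saturation; intros h1 h2 Heq.
  assert (d1 : 0 < b * e1 + c) by nra.
  assert (d2 : 0 < b * e2 + c) by nra.
  assert (Hx : a * e1 * (b * e2 + c) = a * e2 * (b * e1 + c)).
  { replace (a * e1) with (a * e1 / (b * e1 + c) * (b * e1 + c)) by (field; lra).
    replace (a * e2) with (a * e2 / (b * e2 + c) * (b * e2 + c)) by (field; lra).
    rewrite Heq. ring. }
  apply (Rmult_eq_reg_l (a * c)); [lra | nra].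
Qed.

Lemma saturation_range (v : R) :
  (exists e, 0 < e /\ saturation a b c e = v) <-> (0 < v /\ v < a / b).
Proof.
  unfold saturation; split.
  - intros [e [he <-]].
    assert (d : 0 < b * e + c) by nra.
    assert (gap : a / b - a * e / (b * e + c) = a * c / (b * (b * e + c)))
      by (field; lra).
    assert (0 < a * c / (b * (b * e + c)))
      by (apply Rdiv_lt_0_compat; nra).
    split; [apply Rdiv_lt_0_compat; nra | lra].
  - intros [hv hlt].
    assert (slack : 0 < a - b * v).
    { apply (Rmult_lt_compat_l b) in hlt; [| lra].
      replace (b * (a / b)) with a in hlt by (field; lra). lra. }
    exists (c * v / (a - b * v)); split.
    + apply Rdiv_lt_0_compat; nra.
    + field; split; [lra|].
      replace (b * (c * v) + c * (a - b * v)) with (c * a) by ring. nra.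
Qed.
End Saturation.

Lemma solve_linear (a y b : R) : 0 < a -> a * y = b -> y = b / a.
Proof. intros ha <-. field. lra. Qed.

Ltac rate_positivity k hk :=
  let f i := (assert (0 < k i) by (apply hk; lia)) in
  f 1%nat; f 2%nat; f 3%nat; f 4%nat; f 5%nat; f 6%nat; f 7%nat; f 8%nat;
  f 9%nat; f 10%nat; f 11%nat; f 12%nat; f 13%nat; f 14%nat; f 15%nat;
  f 16%nat.

Ltac positivity :=
  repeat (first [ assumption | apply Rdiv_lt_0_compat | apply Rplus_lt_0_compat
                | apply Rmult_lt_0_compat ]).

Ltac nonzero := repeat split; try (apply Rgt_not_eq; unfold Rgt; positivity).

Section Network.
Variable k : nat -> R.
Hypothesis hk : rates_pos k.

Definition ompr_p_level (e : R) : R :=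
  k 3%nat * k 5%nat * e / ((k 4%nat + k 5%nat) * (gamma k * e + k 16%nat)).

Definition ompr_p_sup : R :=
  k 3%nat * k 5%nat / ((k 4%nat + k 5%nat) * gamma k).

(* The candidate steady state with [EnvZ] = e and [EnvZ-P] = p: each
   species is obtained by solving its own balance equation. *)
Definition steady_state_of (e p : R) : state :=
  let atp := k 3%nat * e / (k 4%nat + k 5%nat) in
  let adp := k 2%nat * e / k 1%nat in
  let q := ompr_p_level e in
  let atp_q := k 10%nat * atp * q / (k 11%nat + k 12%nat) in
  let adp_q := k 13%nat * adp * q / (k 14%nat + k 15%nat) in
  let p_ompr := (k 5%nat * atp + k 9%nat * e * q) / k 8%nat in
  let ompr := (k 5%nat * atp + k 7%nat * p_ompr) / (k 6%nat * p) in
  mkState adp e atp p ompr p_ompr q atp_q adp_q.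

Lemma gamma_pos : 0 < gamma k.
Proof. rate_positivity k hk. unfold gamma. positivity. Qed.

Lemma ompr_p_level_saturation (e : R) : 0 < e ->
  ompr_p_level e =
  saturation (k 3%nat * k 5%nat / (k 4%nat + k 5%nat)) (gamma k) (k 16%nat) e.
Proof.
  intro he. rate_positivity k hk. pose proof gamma_pos.
  unfold ompr_p_level, saturation. field. nonzero.
Qed.

Lemma ompr_p_sup_saturation :
  ompr_p_sup = k 3%nat * k 5%nat / (k 4%nat + k 5%nat) / gamma k.
Proof.
  rate_positivity k hk. pose proof gamma_pos.
  unfold ompr_p_sup. field. nonzero.
Qed.

Lemma steady_state_of_steady (e p : R) : 0 < e -> 0 < p ->
  positive_steady_state k (steady_state_of e p).
Proof.
  intros he hp. rate_positivity k hk. pose proof gamma_pos.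
  unfold positive_steady_state, positive_state, steady_state_of,
    d_EnvZ_ADP, d_EnvZ, d_EnvZ_ATP, d_EnvZ_P, d_OmpR, d_EnvZ_P_OmpR,
    d_OmpR_P, d_EnvZ_ATP_OmpR_P, d_EnvZ_ADP_OmpR_P,
    r1, r2, r3, r4, r5, r6, r7, r8, r9, r10, r11, r12, r13, r14, r15, r16,
    ompr_p_level; cbn.
  split; [repeat split; positivity|].
  unfold gamma. repeat split; field; nonzero.
Qed.

(* At a positive steady state every species is determined by [EnvZ],
   [EnvZ-P] and [OmpR-P]: each binding balance is solved for one species,
   and the balances of EnvZ-P and OmpR add up to the conservation law
   k5 [EnvZ-ATP] = k12 [EnvZ-ATP-OmpR-P] + k15 [EnvZ-ADP-OmpR-P] + k16 [OmpR-P]. *)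
Lemma steady_state_relations (x : state) : positive_steady_state k x ->
  let e := EnvZ x in let q := OmpR_P x in
  EnvZ_ADP x = k 2%nat * e / k 1%nat /\
  EnvZ_ATP x = k 3%nat * e / (k 4%nat + k 5%nat) /\
  EnvZ_ATP_OmpR_P x = k 10%nat * EnvZ_ATP x * q / (k 11%nat + k 12%nat) /\
  EnvZ_ADP_OmpR_P x = k 13%nat * EnvZ_ADP x * q / (k 14%nat + k 15%nat) /\
  EnvZ_P_OmpR x = (k 5%nat * EnvZ_ATP x + k 9%nat * e * q) / k 8%nat /\
  OmpR x = (k 5%nat * EnvZ_ATP x + k 7%nat * EnvZ_P_OmpR x) / (k 6%nat * EnvZ_P x) /\
  k 5%nat * EnvZ_ATP x =
    k 12%nat * EnvZ_ATP_OmpR_P x + k 15%nat * EnvZ_ADP_OmpR_P x + k 16%nat * q.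
Proof.
  intro Hs. rate_positivity k hk.
  destruct x as [A E T P O C Q D F]; cbn.
  unfold positive_steady_state, positive_state,
    d_EnvZ_ADP, d_EnvZ, d_EnvZ_ATP, d_EnvZ_P, d_OmpR, d_EnvZ_P_OmpR,
    d_OmpR_P, d_EnvZ_ATP_OmpR_P, d_EnvZ_ADP_OmpR_P,
    r1, r2, r3, r4, r5, r6, r7, r8, r9, r10, r11, r12, r13, r14, r15, r16
    in Hs; cbn in Hs.
  destruct Hs as [[hA [hE [hT [hP [hO [hC [hQ [hD hF]]]]]]]]
                  [dA [dE [dT [dP [dO [dC [dQ [dD dF]]]]]]]]].
  assert (0 < k 6%nat * P) by positivity.
  repeat split; try (apply solve_linear; [positivity | lra]); lra.
Qed.

Lemma steady_state_ompr_p (x : state) : positive_steady_state k x ->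
  OmpR_P x = ompr_p_level (EnvZ x).
Proof.
  intro Hs. rate_positivity k hk. pose proof gamma_pos.
  assert (hE : 0 < EnvZ x) by apply Hs.
  destruct (steady_state_relations x Hs) as [hA [hT [hD [hF [_ [_ Hcons]]]]]].
  assert (Hq : (gamma k * EnvZ x + k 16%nat) * OmpR_P x =
               k 3%nat * k 5%nat * EnvZ x / (k 4%nat + k 5%nat)).
  { replace (k 3%nat * k 5%nat * EnvZ x / (k 4%nat + k 5%nat))
      with (k 5%nat * EnvZ_ATP x) by (rewrite hT; field; nonzero).
    rewrite Hcons, hD, hF, hA, hT. unfold gamma. field. nonzero. }
  apply solve_linear in Hq; [| positivity].
  rewrite Hq. unfold ompr_p_level. field. nonzero.
Qed.

Lemma steady_state_determined (x : state) : positive_steady_state k x ->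
  x = steady_state_of (EnvZ x) (EnvZ_P x).
Proof.
  intro Hs. pose proof (steady_state_ompr_p x Hs) as hQ.
  destruct (steady_state_relations x Hs) as [hA [hT [hD [hF [hC [hO _]]]]]].
  destruct x as [A E T P O C Q D F]; cbn in *.
  unfold steady_state_of. rewrite <- hQ, <- hT, <- hA, <- hD, <- hF, <- hC, <- hO.
  reflexivity.
Qed.
End Network.

Theorem mainTheorem10 (k : nat -> R) (hk : rates_pos k) :
  (forall e ep : R, 0 < e -> 0 < ep ->
     exists! x : state,
       positive_steady_state k x /\ EnvZ x = e /\ EnvZ_P x = ep) /\
  (forall x : state, positive_steady_state k x ->
     OmpR_P x = k 3%nat * k 5%nat * EnvZ x /
                ((k 4%nat + k 5%nat) * (gamma k * EnvZ x + k 16%nat))) /\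
  (forall v : R,
     (exists x : state, positive_steady_state k x /\ OmpR_P x = v) <->
     (0 < v /\ v < k 3%nat * k 5%nat / ((k 4%nat + k 5%nat) * gamma k))) /\
  ~ ACR k OmpR_P.
Proof.
  pose proof (gamma_pos k hk) as hg.
  assert (h16 : 0 < k 16%nat) by (apply hk; lia).
  assert (hM : 0 < k 3%nat * k 5%nat / (k 4%nat + k 5%nat))
    by (rate_positivity k hk; positivity).
  split; [| split; [| split]].
  - intros e p he hp. exists (steady_state_of k e p).
    split; [split; [apply steady_state_of_steady | split]; auto |].
    intros x [Hx [<- <-]]. symmetry. apply steady_state_determined; auto.
  - exact (steady_state_ompr_p k hk).
  - intro v. fold (ompr_p_sup k).
    rewrite (ompr_p_sup_saturation k hk), <- (saturation_range _ _ (k 16%nat)) by auto.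
    split.
    + intros [x [Hx <-]]. assert (hE : 0 < EnvZ x) by apply Hx.
      exists (EnvZ x). split; [exact hE |].
      rewrite (steady_state_ompr_p k hk x Hx), (ompr_p_level_saturation k hk _ hE). reflexivity.
    + intros [e [he <-]]. exists (steady_state_of k e 1).
      split; [apply steady_state_of_steady; auto; lra |].
      apply ompr_p_level_saturation; auto.
  - intros [c Hc].
    (* the steady states with [EnvZ] = 1 and [EnvZ] = 2 have different [OmpR-P] *)
    assert (h1 := Hc _ (steady_state_of_steady k hk 1 1 Rlt_0_1 Rlt_0_1)).
    assert (h2 := Hc _ (steady_state_of_steady k hk 2 1 Rlt_0_2 Rlt_0_1)).
    cbn in h1, h2.
    rewrite ompr_p_level_saturation in h1, h2 by (auto; lra).
    assert (1 = 2) by (apply (saturation_inj _ _ (k 16%nat) hM hg); auto; lra).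
    lra.
Qed.
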